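(* Let $X=\{1,\dots,n\}$, $Y$ a finite set, $Q$ a symmetric irreducible stochastic matrix on $Y$ with eigenspace decomposition $L(Y)=\bigoplus_{j=0}^mW_j$ (notation in context). Let $2\le k\le n$ and let $\underline a=(a_0,a_1,\dots,a_m)$ be a type with $a_0+\cdots+a_m=k$, and $\underline a'=(a_0-1,a_1,\dots,a_m)$. Then $D_k$ maps $P_{k,\underline a}$ into $P_{k-1,\underline a'}$ (in particular $D_kF=0$ for $F\in P_{k,\underline a}$ when $a_0=0$), and, when $a_0\ge1$, $D_k^*$ maps $P_{k-1,\underline a'}$ into $P_{k,\underline a}$.
   Context: $Q=(q(y,y'))$ acts on $L(Y)=\{f:Y\to\mathbb C\}$ by $(Qf)(y)=\sum_{y'}q(y,y')f(y')$; let $\lambda_0=1,\lambda_1,\dots,\lambda_m$ be its distinct eigenvalues with eigenspaces $W_0,\dots,W_m$, where $W_0$ is the space of constant functions; every $f\in W_j$, $j\ge1$, satisfies $\sum_yf(y)=0$. For $0\le k\le n$, $\Theta_k$ is the set of functions $\theta$ whose domain $\mathrm{dom}(\theta)$ is a $k$-element subset of $X$ and which take values in $Y$ ($\Theta_0$ = the empty function). For $\varphi\in\Theta_{k-1},\theta\in\Theta_k$ write $\varphi\subseteq\theta$ if $\mathrm{dom}\varphi\subseteq\mathrm{dom}\theta$ and $\theta|_{\mathrm{dom}\varphi}=\varphi$. $L(\Theta_k)=\bigoplus_{|A|=k}L(Y^A)$, with inner product $\langle F,G\rangle=\sum_{\theta}F(\theta)\overline{G(\theta)}$. For $2\le k\le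 n$, $D_k:L(\Theta_k)\to L(\Theta_{k-1})$, $(D_kF)(\varphi)=\sum_{\theta\in\Theta_k:\varphi\subseteq\theta}F(\theta)$; for $1\le k\le n$, $D_k^*:L(\Theta_{k-1})\to L(\Theta_k)$, $(D_k^*F)(\theta)=\sum_{\varphi\in\Theta_{k-1}:\varphi\subseteq\theta}F(\varphi)$. A type is a tuple $\underline a=(a_0,\dots,a_m)$ of nonnegative integers; $\ell(\underline a)=a_1+\cdots+a_m$. For $|A|=k=a_0+\cdots+a_m$, a fundamental function of type $\underline a$ in $L(Y^A)$ is $F=\bigotimes_{j\in A}F^j$, $F(\theta)=\prod_{j\in A}F^j(\theta(j))$ for $\theta\in Y^A$ (and $0$ on other domains), where each $F^j$ lies in some $W_{i_j}$ and $\#\{j\in A:i_j=i\}=a_i$ for each $i$. $P_{k,\underline a,A}$ is the span of fundamental functions of type $\underline a$ in $L(Y^A)$, and $P_{k,\underline a}=\bigoplus_{|A|=k}P_{k,\underline a,A}$; if a type has a negative entry the corresponding space is $\{0\}$. *)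

From HB Require Import structures.
From mathcomp Require Import all_boot all_order all_algebra.
Set Implicit Arguments. Unset Strict Implicit. Unset Printing Implicit Defensive.
Import Order.TTheory GRing.Theory Num.Theory.
Local Open Scope ring_scope.

Section Defs.
Variables (C : numClosedFieldType) (Y : finType) (n : nat).

Definition Qact (q : Y -> Y -> C) (f : Y -> C) : Y -> C :=
  fun y => \sum_(y' : Y) q y y' * f y'.

Fixpoint qpow (q : Y -> Y -> C) (t : nat) (y y' : Y) : C :=
  match t with
  | 0 => (y == y')%:R
  | t'.+1 => \sum_(z : Y) q y z * qpow q t' z y'
  end.

Definition stochastic (q : Y -> Y -> C) : Prop :=
  (forall y y', 0 <= q y y') /\ (forall y, \sum_(y' : Y) q y y' = 1).

Definition symmetric_kernel (q : Y -> Y -> C) : Prop :=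
  forall y y', q y y' = q y' y.

Definition irreducible_kernel (q : Y -> Y -> C) : Prop :=
  forall y y', exists t, 0 < qpow q t y y'.

Definition eigensp (q : Y -> Y -> C) (c : C) (f : Y -> C) : Prop :=
  forall y, Qact q f y = c * f y.

Definition eigen_enumeration (q : Y -> Y -> C) (m : nat) (lam : 'I_m.+1 -> C) : Prop :=
  [/\ lam ord0 = 1, injective lam,
      (forall j, exists f, eigensp q (lam j) f /\ exists y, f y != 0) &
      (forall c f, eigensp q c f -> (exists y, f y != 0) -> exists j, c = lam j)].

(* Theta = partial functions X -> Y, X = 'I_n, encoded as {ffun 'I_n -> option Y};
   dom theta = the set of x with theta x <> None. *)
Definition Theta := {ffun 'I_n -> option Y}.

Definition dom (th : Theta) : {set 'I_n} := [set x | th x != None].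

Definition psub (ph th : Theta) : bool :=
  [forall x, (ph x != None) ==> (th x == ph x)].

(* D_k : L(Theta_k) -> L(Theta_{k-1}); elements of L(Theta_j) are functions
   Theta -> C, only their values on Theta_j being relevant. *)
Definition Dk (k : nat) (F : Theta -> C) : Theta -> C :=
  fun ph => if #|dom ph| == k.-1 then
              \sum_(th : Theta | (#|dom th| == k) && psub ph th) F th
            else 0.

Definition Dkstar (k : nat) (F : Theta -> C) : Theta -> C :=
  fun th => if #|dom th| == k then
              \sum_(ph : Theta | (#|dom ph| == k.-1) && psub ph th) F ph
            else 0.

(* Fundamental function of type a (a : 'I_m.+1 -> int, so that types with a
   negative entry have no fundamental function): F = (x)_{j in A} F^j with
   F^j in W_{i_j}, #{j in A : i_j = t} = a_t, |A| = k. *)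
Definition fundamental (q : Y -> Y -> C) (m : nat) (lam : 'I_m.+1 -> C)
  (k : nat) (a : 'I_m.+1 -> int) (F : Theta -> C) : Prop :=
  exists (A : {set 'I_n}) (i : 'I_n -> 'I_m.+1) (Fj : 'I_n -> Y -> C),
    [/\ #|A| = k,
        (forall t, (#|[set j in A | i j == t]|)%:Z = a t),
        (forall j, j \in A -> eigensp q (lam (i j)) (Fj j)) &
        (forall th, F th = if dom th == A then
                             \prod_(j in A) oapp (Fj j) 0 (th j)
                           else 0)].

(* P_{k,a} = span of all fundamental functions of type a (= the direct sum over
   |A| = k of the spans P_{k,a,A}); it is {0} when a has a negative entry. *)
Definition Pspace (q : Y -> Y -> C) (m : nat) (lam : 'I_m.+1 -> C)
  (k : nat) (a : 'I_m.+1 -> int) (F : Theta -> C) : Prop :=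
  exists (N : nat) (G : 'I_N -> Theta -> C),
    (forall r, fundamental q lam k a (G r)) /\
    (forall th, F th = \sum_(r < N) G r th).

End Defs.

(* A fundamental function is a tensor product F = (x)_{j in A} F^j, and D_k acts on it
   factorwise: D_k F = sum_{x in A} (sum_y F^x(y)) (x)_{j in A \ x} F^j.  Since Q is
   doubly stochastic, sum_y F^x(y) = 0 whenever F^x lies in an eigenspace W_i with
   i <> 0, so only the factors in W_0 survive and removing one of them lowers a_0 by
   one.  Dually, D_k^* (x)_{j in B} F^j = sum_{x notin B} 1_x (x) (x)_{j in B} F^j,
   and the constant function 1_x lies in W_0, so a_0 goes up by one. *)

From HB Require Import structures.
From mathcomp Require Import all_boot all_order all_algebra.
Set Implicit Arguments. Unset Strict Implicit. Unset Printing Implicit Defensive.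
Import Order.TTheory GRing.Theory Num.Theory.
Local Open Scope ring_scope.

Lemma setD1_of_subset_card (T : finType) (A B : {set T}) :
  B \subset A -> #|A| = #|B|.+1 -> exists2 x, x \in A & B = A :\ x.
Proof.
move=> sBA cardA; have /cards1P [x Ex] : #|A :\: B| == 1%N.
  by rewrite cardsD (setIidPr sBA) cardA subSnn.
have /setDP [xA xB] : x \in A :\: B by rewrite Ex set11.
exists x => //; apply/setP => j; rewrite in_setD1.
have [-> | jx] := eqVneq j x; first by rewrite (negbTE xB).
apply/idP/idP => [/(subsetP sBA) // | jA]; apply: contraTT jx => jB.
by rewrite negbK -in_set1 -Ex inE jB jA.
Qed.

Lemma cards_inD1 (T : finType) (A : {set T}) (P : pred T) x :
  #|[set j in A | P j]| = (((x \in A) && P x) + #|[set j in A :\ x | P j]|)%N.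
Proof.
rewrite (cardsD1 x) inE; congr (_ + _)%N.
by apply: eq_card => j; rewrite !inE andbA.
Qed.

Section Tensor.
Variables (C : numClosedFieldType) (Y : finType) (n : nat).
Local Notation Th := (Theta Y n).
Implicit Types (ph th : Th) (A B : {set 'I_n}) (f : 'I_n -> Y -> C).

Lemma in_dom th x : (x \in dom th) = (th x != None).
Proof. by rewrite inE. Qed.

Lemma psubP ph th :
  reflect (forall x, ph x != None -> th x = ph x) (psub ph th).
Proof.
by apply: (iffP forallP) => H x; [move=> /(implyP (H x))/eqP | apply/implyP => /H ->].
Qed.

Lemma psub_dom ph th : psub ph th -> dom ph \subset dom th.
Proof. by move=> /psubP H; apply/subsetP => x; rewrite !in_dom => /[dup] /H ->. Qed.

Definition extend ph x (y : Y) : Th :=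
  [ffun j => if j == x then Some y else ph j].

Lemma dom_extend ph x y : dom (extend ph x y) = x |: dom ph.
Proof. by apply/setP => j; rewrite in_setU1 !in_dom ffunE; case: (j == x). Qed.

Lemma psub_extend ph x y : x \notin dom ph -> psub ph (extend ph x y).
Proof.
move=> xph; apply/psubP => j jph; rewrite ffunE ifN //.
by apply: contraTneq jph => ->; rewrite -in_dom.
Qed.

Lemma extend_inj ph x : injective (extend ph x).
Proof. by move=> y1 y2 /ffunP /(_ x); rewrite !ffunE eqxx => -[]. Qed.

Lemma psub_extendP ph th x : x \notin dom ph -> psub ph th ->
  dom th = x |: dom ph -> exists y, th = extend ph x y.
Proof.
move=> xph /psubP sub domth.
have : x \in dom th by rewrite domth setU11.
rewrite in_dom; case Ex: (th x) => [y|] // _; exists y.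
apply/ffunP => j; rewrite ffunE; case: eqP => [-> //|/eqP ne].
case: (boolP (j \in dom ph)) => [|jph]; first by rewrite in_dom => /sub.
have : j \notin dom th by rewrite domth in_setU1 negb_or ne.
by move: jph; rewrite !in_dom !negbK => /eqP -> /eqP.
Qed.

Definition restrict th B : Th :=
  [ffun j => if j \in B then th j else None].

Lemma dom_restrict th B : B \subset dom th -> dom (restrict th B) = B.
Proof.
move=> sB; apply/setP => j; rewrite in_dom ffunE.
by case: ifP => [/(subsetP sB)|]; rewrite ?in_dom.
Qed.

Lemma psub_restrict th B : psub (restrict th B) th.
Proof. by apply/psubP => j; rewrite ffunE; case: ifP. Qed.

Lemma psub_restrictP ph th : psub ph th -> ph = restrict th (dom ph).
Proof.
move=> /psubP sub; apply/ffunP => j; rewrite ffunE in_dom.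
by case: ifPn => [/sub ->|/negPn/eqP].
Qed.

Definition tensor A f th : C :=
  if dom th == A then \prod_(j in A) oapp (f j) 0 (th j) else 0.

Lemma sum_tensor_card A f (P : pred Th) :
  \sum_(th | (#|dom th| == #|A|) && P th) tensor A f th =
  \sum_(th | (dom th == A) && P th) tensor A f th.
Proof.
rewrite (bigID (fun th => dom th == A)) /= [X in _ + X]big1 ?addr0; last first.
  by move=> th /andP[_ /negbTE]; rewrite /tensor => ->.
by apply: eq_bigl => th; case: (eqVneq (dom th) A) => [->|]; rewrite ?eqxx ?andbF ?andbT.
Qed.

Lemma tensor_extend A f ph x y : x \notin dom ph -> A = x |: dom ph ->
  tensor A f (extend ph x y) = f x y * tensor (dom ph) f ph.
Proof.
move=> xph ->; rewrite /tensor dom_extend !eqxx big_setU1 //= ffunE eqxx.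
congr (_ * _); apply: eq_bigr => j jph; rewrite ffunE ifN //.
by apply: contraNneq xph => <-.
Qed.

Lemma sum_tensor_extend A f ph x : x \notin dom ph -> A = x |: dom ph ->
  \sum_(th | (dom th == A) && psub ph th) tensor A f th =
  (\sum_y f x y) * tensor (dom ph) f ph.
Proof.
move=> xph defA; rewrite (eq_bigl (mem [set extend ph x y | y in [set: Y]])) => [|th].
  rewrite big_imset /=; last exact: in2W (@extend_inj ph x).
  by rewrite mulr_suml; apply: eq_big => [y|y _]; rewrite ?in_setT ?tensor_extend.
apply/andP/imsetP => [[/eqP domth sub] | [y _ ->]].
  by have [y ->] := psub_extendP xph sub (etrans domth defA); exists y.
by rewrite dom_extend -defA psub_extend.
Qed.

Lemma sum_tensor_restrict B f th : B \subset dom th ->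
  \sum_(ph | (dom ph == B) && psub ph th) tensor B f ph =
  \prod_(j in B) oapp (f j) 0 (th j).
Proof.
move=> sB; rewrite (big_pred1 (restrict th B)) => [|ph].
  by rewrite /tensor dom_restrict // eqxx; apply: eq_bigr => j jB; rewrite ffunE jB.
apply/andP/eqP => [[/eqP <- /psub_restrictP] // | ->].
by rewrite dom_restrict ?psub_restrict.
Qed.

Lemma eq_Dk k (F F' : Th -> C) : F =1 F' -> Dk k F =1 Dk k F'.
Proof. by move=> E ph; rewrite /Dk; case: ifP => // _; apply: eq_bigr. Qed.

Lemma eq_Dkstar k (F F' : Th -> C) : F =1 F' -> Dkstar k F =1 Dkstar k F'.
Proof. by move=> E th; rewrite /Dkstar; case: ifP => // _; apply: eq_bigr. Qed.

Lemma Dk_sum k N (G : 'I_N -> Th -> C) :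
  Dk k (fun th => \sum_(r < N) G r th) =1 fun ph => \sum_(r < N) Dk k (G r) ph.
Proof. by move=> ph; rewrite /Dk; case: ifP => _; [exact: exchange_big | rewrite big1]. Qed.

Lemma Dkstar_sum k N (G : 'I_N -> Th -> C) :
  Dkstar k (fun th => \sum_(r < N) G r th) =1 fun th => \sum_(r < N) Dkstar k (G r) th.
Proof.
by move=> th; rewrite /Dkstar; case: ifP => _; [exact: exchange_big | rewrite big1].
Qed.

Lemma Dk_tensor k A f : (0 < k)%N -> #|A| = k ->
  Dk k (tensor A f) =1 fun ph => \sum_(x in A) (\sum_y f x y) * tensor (A :\ x) f ph.
Proof.
move=> k0 cardA ph; rewrite /Dk -cardA sum_tensor_card.
have [/exists_inP [x xA /eqP domph] | noD1] := boolP [exists x in A, dom ph == A :\ x].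
  have xph : x \notin dom ph by rewrite domph setD11.
  have -> : #|dom ph| == #|A|.-1 by rewrite (cardsD1 x A) xA domph.
  rewrite [RHS](bigD1 x) //= [X in _ + X]big1 ?addr0 => [|z /andP[zA zx]].
    by rewrite (sum_tensor_extend f xph) domph // setD1K.
  rewrite /tensor ifN ?mulr0 // domph; apply/negP => /eqP/setP/(_ x).
  by rewrite !in_setD1 eqxx eq_sym zx xA.
rewrite [RHS]big1 => [|x xA]; last first.
  rewrite /tensor ifN ?mulr0 //; apply: contraNneq noD1 => domph.
  by apply/exists_inP; exists x; rewrite ?domph ?eqxx.
case: ifP => // /eqP cardph; apply: big1 => th /andP[/eqP domth /psub_dom sub].
have cardA' : #|A| = #|dom ph|.+1 by rewrite cardph prednK // cardA.
have subA : dom ph \subset A by rewrite -domth.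
have [x xA domph] := setD1_of_subset_card subA cardA'.
by case/negP: noD1; apply/exists_inP; exists x; rewrite ?domph ?eqxx.
Qed.

Definition insert_one f x : 'I_n -> Y -> C :=
  fun j => if j == x then (fun _ => 1) else f j.

Lemma Dkstar_tensor k B f : (0 < k)%N -> #|B| = k.-1 ->
  Dkstar k (tensor B f) =1 fun th => \sum_(x | x \notin B) tensor (x |: B) (insert_one f x) th.
Proof.
move=> k0 cardB th; rewrite /Dkstar -[k.-1]cardB sum_tensor_card.
have [/exists_inP [x xB /eqP domth] | noU1] := boolP [exists x in ~: B, dom th == x |: B].
  rewrite inE in xB.
  have -> : #|dom th| == k by rewrite domth cardsU1 xB cardB add1n prednK.
  rewrite sum_tensor_restrict ?domth ?subsetUr //.
  rewrite [RHS](bigD1 x) //= [X in _ + X]big1 ?addr0 => [|z /andP[zB zx]].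
    rewrite /tensor domth eqxx big_setU1 //= /insert_one eqxx.
    have : x \in dom th by rewrite domth setU11.
    rewrite in_dom; case: (th x) => // y _; rewrite mul1r.
    by apply: eq_bigr => j jB; rewrite ifN //; apply: contraNneq xB => <-.
  rewrite /tensor ifN // domth; apply/negP => /eqP/setP/(_ z).
  by rewrite !in_setU1 eqxx (negbTE zx) (negbTE zB).
rewrite [RHS]big1 => [|x xB]; last first.
  rewrite /tensor ifN //; apply: contraNneq noU1 => domth.
  by apply/exists_inP; exists x; rewrite ?inE ?domth ?eqxx.
case: ifP => // /eqP cardth; apply: big1 => ph /andP[/eqP domph /psub_dom sub].
have cardth' : #|dom th| = #|B|.+1 by rewrite cardth cardB prednK.
have subB : B \subset dom th by rewrite -domph.
have [x xth defB] := setD1_of_subset_card subB cardth'.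
case/negP: noU1; apply/exists_inP; exists x; first by rewrite inE defB setD11.
by rewrite defB setD1K.
Qed.

End Tensor.

Arguments eq_Dk {C Y n k F F'}.
Arguments eq_Dkstar {C Y n k F F'}.

Section Eigenspaces.
Variables (C : numClosedFieldType) (Y : finType) (q : Y -> Y -> C).

Lemma stochastic_sym_col (Hstoch : stochastic q) (Hsym : symmetric_kernel q) y' :
  \sum_y q y y' = 1.
Proof. by rewrite -(Hstoch.2 y'); apply: eq_bigr => y _; rewrite Hsym. Qed.

Lemma eigensp_scale c f d : eigensp q c f -> eigensp q c (fun y => d * f y).
Proof.
move=> Hf y; rewrite /Qact; under eq_bigr do rewrite mulrCA.
by rewrite -mulr_sumr -/(Qact q f y) Hf mulrCA.
Qed.

Lemma eigensp1_const : (forall y, \sum_y' q y y' = 1) -> eigensp q 1 (fun _ => 1).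
Proof.
by move=> Hrow y; rewrite /Qact mul1r -[RHS](Hrow y); apply: eq_bigr => y' _; rewrite mulr1.
Qed.

Lemma eigensp_sum_eq0 c f : (forall y', \sum_y q y y' = 1) ->
  eigensp q c f -> c != 1 -> \sum_y f y = 0.
Proof.
move=> Hcol Hf c1.
have E : c * \sum_y f y = \sum_y f y.
  rewrite mulr_sumr -(eq_bigr _ (fun y _ => Hf y)) /Qact exchange_big /=.
  by apply: eq_bigr => y' _; rewrite -mulr_suml Hcol mul1r.
apply/eqP; move: E => /eqP; rewrite -subr_eq0 -{2}[\sum_y f y]mul1r -mulrBl.
by rewrite mulf_eq0 subr_eq0 (negbTE c1).
Qed.

End Eigenspaces.

Section Pspace.
Variables (C : numClosedFieldType) (Y : finType) (n : nat).
Variables (q : Y -> Y -> C) (m : nat) (lam : 'I_m.+1 -> C).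
Local Notation Th := (Theta Y n).
Implicit Types (F G : Th -> C) (a : 'I_m.+1 -> int).

Definition lower_type a : 'I_m.+1 -> int := fun t => a t - (t == ord0)%:Z.

Lemma Pspace_ext k a F G : F =1 G -> Pspace q lam k a F -> Pspace q lam k a G.
Proof. by move=> E [N [H [HH EF]]]; exists N, H; split=> // th; rewrite -E. Qed.

Lemma Pspace0 k a : Pspace q lam k a (fun _ : Th => 0).
Proof. by exists 0%N, (fun _ _ => 0); split=> [[]|th]; rewrite ?big_ord0. Qed.

Lemma PspaceD k a F G : Pspace q lam k a F -> Pspace q lam k a G ->
  Pspace q lam k a (fun th => F th + G th).
Proof.
case=> [N1 [G1 [H1 E1]]] [N2 [G2 [H2 E2]]].
exists (N1 + N2)%N, (fun r => match split r with inl r1 => G1 r1 | inr r2 => G2 r2 end).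
split=> [r|th]; first by case: (split r).
rewrite big_split_ord E1 E2; congr (_ + _); apply: eq_bigr => r _.
  by rewrite -[lshift N2 r]/(unsplit (inl r)) unsplitK.
by rewrite -[rshift N1 r]/(unsplit (inr r)) unsplitK.
Qed.

Lemma Pspace_sum k a (I : Type) (s : seq I) (P : pred I) (G : I -> Th -> C) :
  (forall i, P i -> Pspace q lam k a (G i)) ->
  Pspace q lam k a (fun th => \sum_(i <- s | P i) G i th).
Proof.
move=> HG; elim: s => [|x s IH].
  by apply: Pspace_ext (Pspace0 _ _) => th; rewrite big_nil.
case Px: (P x); last by apply: Pspace_ext IH => th; rewrite big_cons Px.
by apply: Pspace_ext (PspaceD (HG x Px) IH) => th; rewrite big_cons Px.
Qed.

Lemma Pspace_fundamental k a F : fundamental q lam k a F -> Pspace q lam k a F.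
Proof. by move=> HF; exists 1%N, (fun _ => F); split=> // th; rewrite big_ord1. Qed.

Lemma Pspace_map (T : (Th -> C) -> Th -> C) k a k' a' F :
  (forall N (G : 'I_N -> Th -> C), T (fun th => \sum_(r < N) G r th) =1
                                   fun th => \sum_(r < N) T (G r) th) ->
  (forall F G, F =1 G -> T F =1 T G) ->
  (forall F, fundamental q lam k a F -> Pspace q lam k' a' (T F)) ->
  Pspace q lam k a F -> Pspace q lam k' a' (T F).
Proof.
move=> Tsum Text Tfund [N [G [HG EF]]].
have E : (fun th => \sum_(r < N) T (G r) th) =1 T F.
  by move=> th; rewrite (Text _ _ EF) Tsum.
by apply: Pspace_ext E _; apply: Pspace_sum => r _; apply: Tfund.
Qed.

(* [P_{k,a}] is closed only under sums; a scalar has to be absorbed into a tensor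
   factor, hence [0 < k]. *)
Lemma fundamental_scale k a F d : (0 < k)%N -> fundamental q lam k a F ->
  fundamental q lam k a (fun th => d * F th).
Proof.
move=> k0 [A [i [f [cardA typeA eigA defF]]]].
have [x0 x0A] : exists x0, x0 \in A by apply/card_gt0P; rewrite cardA.
exists A, i, (fun j => if j == x0 then (fun y => d * f j y) else f j).
split=> // [j jA|th]; first by case: eqP => _; [apply: eigensp_scale|]; apply: eigA.
rewrite defF; case: ifP => _; last by rewrite mulr0.
rewrite (bigD1 x0) //= [in RHS](bigD1 x0) //= eqxx mulrA; congr (_ * _).
  by case: (th x0) => //=; rewrite mulr0.
by apply: eq_bigr => j /andP[_ /negbTE ->].
Qed.

Lemma Pspace_scale k a F d : (0 < k)%N -> Pspace q lam k a F ->
  Pspace q lam k a (fun th => d * F th).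
Proof.
move=> k0 [N [G [HG EF]]]; exists N, (fun r th => d * G r th).
by split=> [r|th]; [apply: fundamental_scale | rewrite EF mulr_sumr].
Qed.

Lemma Pspace_neg_type k a t F : a t < 0 -> Pspace q lam k a F -> F =1 fun _ => 0.
Proof.
move=> at0 [N [G [HG EF]]] th; rewrite EF big1 // => r _.
by have [A [i [f [_ /(_ t) typeA _ _]]]] := HG r; move: at0; rewrite -typeA.
Qed.

Section Derivations.
Hypothesis Hlam0 : lam ord0 = 1.

Lemma Dk_fundamental k a F : (forall y', \sum_y q y y' = 1) -> injective lam ->
  (1 < k)%N -> fundamental q lam k a F -> Pspace q lam k.-1 (lower_type a) (Dk k F).
Proof.
move=> Hcol Hinj k1 [A [i [f [cardA typeA eigA defF]]]].
apply: (@Pspace_ext _ _ (fun ph => \sum_(x in A) (\sum_y f x y) * tensor (A :\ x) f ph)).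
  by move=> ph; rewrite (eq_Dk defF) (Dk_tensor _ _ cardA) // ltnW.
apply: Pspace_sum => x xA.
have [ix0 | ix] := eqVneq (i x) ord0; last first.
  apply: Pspace_ext (Pspace0 _ _) => ph.
  by rewrite (eigensp_sum_eq0 Hcol (eigA x xA)) ?mul0r // -Hlam0 (inj_eq Hinj).
apply: Pspace_scale; first by rewrite -subn1 subn_gt0.
apply: Pspace_fundamental; exists (A :\ x), i, f; split => // [|t|j].
- by move: cardA; rewrite (cardsD1 x) xA => <-.
- rewrite /lower_type -typeA (cards_inD1 A _ x) xA ix0 PoszD [ord0 == t]eq_sym.
  by rewrite addrAC subrr add0r.
- by move=> /setD1P[_ /eigA].
Qed.

Lemma Dkstar_fundamental k a F : (forall y, \sum_y' q y y' = 1) ->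
  (0 < k)%N -> fundamental q lam k.-1 (lower_type a) F -> Pspace q lam k a (Dkstar k F).
Proof.
move=> Hrow k0 [B [i [f [cardB typeB eigB defF]]]].
apply: (@Pspace_ext _ _
  (fun th => \sum_(x | x \notin B) tensor (x |: B) (insert_one f x) th)).
  by move=> th; rewrite (eq_Dkstar defF) Dkstar_tensor.
apply: Pspace_sum => x xB; apply: Pspace_fundamental.
exists (x |: B), (fun j => if j == x then ord0 else i j), (insert_one f x).
split=> [|t|j|th] //.
- by rewrite cardsU1 xB cardB add1n prednK.
- rewrite (cards_inD1 _ _ x) setU11 eqxx setU1K //.
  have -> : [set j in B | (if j == x then ord0 else i j) == t] = [set j in B | i j == t].
    by apply/setP => j; rewrite !inE; case: (eqVneq j x) => [->|]; rewrite ?(negbTE xB).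
  by rewrite PoszD typeB /lower_type [ord0 == t]eq_sym addrC subrK.
- case/setU1P => [->|jB]; rewrite /insert_one ?eqxx ?Hlam0; first exact: eigensp1_const.
  have jx : j != x by apply: contraNneq xB => <-.
  by rewrite (negbTE jx); apply: eigB.
Qed.

End Derivations.
End Pspace.

Theorem lemma7p3 (C : numClosedFieldType) (Y : finType) (n : nat)
  (q : Y -> Y -> C) (m : nat) (lam : 'I_m.+1 -> C)
  (Hstoch : stochastic q) (Hsym : symmetric_kernel q) (Hirr : irreducible_kernel q)
  (Hlam : eigen_enumeration q lam)
  (k : nat) (Hk2 : (2 <= k)%N) (Hkn : (k <= n)%N)
  (a : 'I_m.+1 -> nat) (Ha : (\sum_(t < m.+1) a t)%N = k) :
  let a' : 'I_m.+1 -> int := fun t => (a t)%:Z - (t == ord0)%:Z in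
  (forall F : Theta Y n -> C, Pspace q lam k (fun t => (a t)%:Z) F ->
     Pspace q lam k.-1 a' (Dk k F)) /\
  (a ord0 = 0%N -> forall F : Theta Y n -> C,
     Pspace q lam k (fun t => (a t)%:Z) F -> forall ph, Dk k F ph = 0) /\
  ((1 <= a ord0)%N -> forall F : Theta Y n -> C,
     Pspace q lam k.-1 a' F -> Pspace q lam k (fun t => (a t)%:Z) (Dkstar k F)).
Proof.
move=> a'.
have [Hlam0 Hinj _ _] := Hlam.
have Hcol := stochastic_sym_col Hstoch Hsym.
have DkP (F : Theta Y n -> C) :
    Pspace q lam k (fun t => (a t)%:Z) F -> Pspace q lam k.-1 a' (Dk k F).
  apply: (Pspace_map (T := Dk k)) => [N G|F1 F2|F1]; first exact: Dk_sum.
    exact: eq_Dk.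
  exact: (Dk_fundamental (a := fun t => (a t)%:Z) Hlam0 Hcol Hinj Hk2).
split; [exact: DkP | split].
- move=> a00 F /DkP; apply: (Pspace_neg_type (t := ord0)).
  by rewrite /a' a00 eqxx.
(* [Dkstar_fundamental] holds for every type. *)
- move=> _ F; apply: (Pspace_map (T := Dkstar k)) => [N G|F1 F2|F1]; first exact: Dkstar_sum.
    exact: eq_Dkstar.
  by apply: (Dkstar_fundamental (a := fun t => (a t)%:Z) Hlam0 Hstoch.2); apply: leq_trans Hk2.
Qed.
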